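(* Let $n\ge2$ and let $\equiv$ be a lattice congruence of the weak order on $S_n$. The following are equivalent: (i) $\mathrm{id}_n\equiv c_{n-1}(\mathrm{id}_{n-1})$; (ii) there is $\pi\in S_{n-1}$ such that $c_i(\pi)\equiv c_{i+1}(\pi)$ for all $1\le i<n$; (iii) for all $\pi\in S_{n-1}$ and all $1\le i<n$, $c_i(\pi)\equiv c_{i+1}(\pi)$.
   Context: $S_n$ is the set of permutations of $[n]$ in one-line notation, ordered by the weak order (inclusion of inversion sets $\mathrm{inv}(\pi)=\{(a_i,a_j):i<j,\ a_i>a_j\}$), which is a lattice. A lattice congruence is an equivalence relation on $S_n$ compatible with joins and meets: $\pi\equiv\pi'$ and $\rho\equiv\rho'$ imply $\pi\vee\rho\equiv\pi'\vee\rho'$ and $\pi\wedge\rho\equiv\pi'\wedge\rho'$. $\mathrm{id}_n=12\cdots n$. For $\pi\in S_{n-1}$ and $1\le i\le n$, $c_i(\pi)\in S_n$ is obtained by inserting the value $n$ at position $i$ of $\pi$. *)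

(* Permutations of [n] are represented in one-line notation
   as sequences of naturals that are permutations of 1..n. *)
From mathcomp Require Import all_boot.
Set Implicit Arguments. Unset Strict Implicit. Unset Printing Implicit Defensive.

Definition is_perm (n : nat) (s : seq nat) : Prop := perm_eq s (iota 1 n).

Definition idn (n : nat) : seq nat := iota 1 n.

Definition inv (s : seq nat) (p : nat * nat) : Prop :=
  exists i j, i < j /\ j < size s /\ nth 0 s i = p.1 /\ nth 0 s j = p.2 /\ p.1 > p.2.

Definition weak_le (s t : seq nat) : Prop := forall p, inv s p -> inv t p.

Definition is_join (n : nat) (x y z : seq nat) : Prop :=
  is_perm n z /\ weak_le x z /\ weak_le y z /\
  forall w, is_perm n w -> weak_le x w -> weak_le y w -> weak_le z w.

Definition is_meet (n : nat) (x y z : seq nat) : Prop :=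
  is_perm n z /\ weak_le z x /\ weak_le z y /\
  forall w, is_perm n w -> weak_le w x -> weak_le w y -> weak_le w z.

(* a lattice congruence of the weak order on S_n (only its restriction to S_n matters) *)
Definition lattice_congruence (n : nat) (R : seq nat -> seq nat -> Prop) : Prop :=
  (forall x, is_perm n x -> R x x) /\
  (forall x y, is_perm n x -> is_perm n y -> R x y -> R y x) /\
  (forall x y z, is_perm n x -> is_perm n y -> is_perm n z -> R x y -> R y z -> R x z) /\
  (forall x x' y y' z z', is_perm n x -> is_perm n x' -> is_perm n y -> is_perm n y' ->
     R x x' -> R y y' -> is_join n x y z -> is_join n x' y' z' -> R z z') /\
  (forall x x' y y' z z', is_perm n x -> is_perm n x' -> is_perm n y -> is_perm n y' ->
     R x x' -> R y y' -> is_meet n x y z -> is_meet n x' y' z' -> R z z').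

(* c_i(pi) in S_n for pi in S_{n-1}: insert the value n at (1-indexed) position i *)
Definition cins (n i : nat) (s : seq nat) : seq nat :=
  take i.-1 s ++ n :: drop i.-1 s.

(* Every [cins n i pi] lies between [cins n n pi = pi ++ [:: n]] and
   [cins n 1 pi = n :: pi] in the weak order, their inversion sets differing only
   in pairs [(n, y)]; since congruence classes are intervals, (ii) and (iii) reduce
   to [cins n n pi ≡ cins n 1 pi].  If this holds for some [pi], meeting both
   sides with [w = cins n n.-1 (idn n.-1)] yields [idn n ≡ w].
   Conversely, from [idn n ≡ w], let [t] be [pi] with [n - 1] moved to the front:
   joining [idn n] and [w] with [cins n n t] gives [cins n n t ≡ cins n 1 t],
   because [(n, n - 1)] together with the inversions [(n - 1, y)] of [t] forces
   every [(n, y)]; meeting this with [cins n 1 pi] gives the claim for [pi]. *)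

From mathcomp Require Import all_boot zify.
Set Implicit Arguments. Unset Strict Implicit. Unset Printing Implicit Defensive.

Definition before (s : seq nat) (x y : nat) : bool :=
  [&& x \in s, y \in s & index x s < index y s].

Lemma before_cat s1 s2 x y : before (s1 ++ s2) x y =
  [|| before s1 x y, [&& x \in s1, y \notin s1 & y \in s2] |
      [&& x \notin s1, y \notin s1 & before s2 x y]].
Proof.
rewrite /before !mem_cat !index_cat.
have := index_mem x s1; have := index_mem y s1.
case: (x \in s1); case: (y \in s1) => /= hy hx.
- by rewrite !orbF.
- by rewrite orbF; case: (y \in s2) => //=; lia.
- by case: (x \in s2) => //=; lia.
- by rewrite ltn_add2l.
Qed.

Lemma before_cons z s x y : before (z :: s) x y =
  ((x == z) && (y \in s) && (y != z)) || [&& x != z, y != z & before s x y].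
Proof.
rewrite -cat1s before_cat /before !inE.
by case: (eqVneq x z) => [->|_]; case: (eqVneq y z) => [->|_];
  rewrite /= ?eqxx ?andbT ?andbF ?orbF.
Qed.

Lemma before_trans s x y z : before s x y -> before s y z -> before s x z.
Proof.
case/and3P=> xs _ lt_xy /and3P [_ zs lt_yz].
by rewrite /before xs zs (ltn_trans lt_xy lt_yz).
Qed.

Lemma before_insert s1 s2 z x y : x != z -> y != z ->
  before (s1 ++ z :: s2) x y = before (s1 ++ s2) x y.
Proof.
by move=> xz yz; rewrite !before_cat before_cons inE (negbTE xz) (negbTE yz).
Qed.

Lemma before_filter (p : pred nat) s x y :
  p x -> p y -> before s x y -> before (filter p s) x y.
Proof.
move=> px py; elim: s => [|z s IHs] //=.
rewrite before_cons; case pz: (p z); last first.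
  by case/orP=> [/andP [/andP [/eqP xz _] _]|/and3P [_ _ /IHs]] //; rewrite -xz px in pz.
rewrite before_cons mem_filter py.
by case/orP=> [/andP [/andP [-> ->] ->] //|/and3P [-> -> /IHs ->]]; rewrite orbT.
Qed.

Lemma inv_mem s x y : inv s (x, y) -> x \in s /\ y \in s.
Proof.
case=> i [j [lt_ij [lt_js [/= <- [/= <- _]]]]].
by split; apply: mem_nth => //; apply: ltn_trans lt_js.
Qed.

Lemma inv_before s x y : uniq s -> inv s (x, y) <-> before s x y /\ y < x.
Proof.
move=> us; split.
- case=> i [j [lt_ij [lt_js [/= <- [/= <- lt_yx]]]]].
  have lt_is : i < size s by apply: ltn_trans lt_js.
  by rewrite /before !mem_nth // !index_uniq.
- case=> /and3P [xs ys lt_xy] lt_yx.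
  by exists (index x s), (index y s); rewrite index_mem /= !nth_index.
Qed.

Lemma inv_trans s x y z : uniq s -> inv s (x, y) -> inv s (y, z) -> inv s (x, z).
Proof.
move=> us; rewrite !inv_before // => -[bxy lt_yx] [byz lt_zy].
by split; [apply: before_trans byz | apply: ltn_trans lt_yx].
Qed.

Lemma inv_cons s x y : y \in s -> y < x -> inv (x :: s) (x, y).
Proof.
by move=> ys lt_yx; exists 0, (index y s).+1; rewrite /= nth_index ?ltnS ?index_mem.
Qed.

Lemma inv_iota a k p : ~ inv (iota a k) p.
Proof.
case=> i [j [lt_ij [lt_jk [hx [hy]]]]]; rewrite size_iota in lt_jk.
rewrite -hx -hy !nth_iota //; [lia | exact: ltn_trans lt_jk].
Qed.

Lemma inv_filter (p : pred nat) s x y : uniq s -> p x -> p y ->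
  inv s (x, y) -> inv (filter p s) (x, y).
Proof.
move=> us px py; rewrite !inv_before ?filter_uniq // => -[bxy lt_yx].
by split; first exact: before_filter.
Qed.

Lemma inv_insert_max s1 s2 z x y : uniq (s1 ++ s2) -> {in s1 ++ s2, forall v, v < z} ->
  inv (s1 ++ z :: s2) (x, y) <-> inv (s1 ++ s2) (x, y) \/ x = z /\ y \in s2.
Proof.
move=> us lt_z.
have zs : z \notin s1 ++ s2 by apply/negP => /lt_z; rewrite ltnn.
have zfront : perm_eq (s1 ++ z :: s2) (z :: s1 ++ s2) by rewrite -cat1s perm_catCA.
have uzs : uniq (s1 ++ z :: s2) by rewrite (perm_uniq zfront) /= zs.
rewrite !inv_before //; case: (eqVneq x z) => [->|xz].
- have [zs1 zs2] : z \notin s1 /\ z \notin s2 by move: zs; rewrite mem_cat negb_or => /andP.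
  have no_before t : z \notin t -> before t z y = false by rewrite /before => /negbTE ->.
  rewrite before_cat before_cons eqxx (negbTE zs1) !no_before //= orbF.
  split=> [[/andP [_ /andP [ys2 _]] _]|[[]//|[_ ys2]]]; first by right.
  move: us; rewrite cat_uniq => /and3P [_ /hasPn /(_ y ys2) ys1 _].
  have lt_yz : y < z by apply: lt_z; rewrite mem_cat ys2 orbT.
  by rewrite ys1 ys2 neq_ltn lt_yz.
- case: (eqVneq y z) => [->|yz]; last first.
    rewrite before_insert //; split=> [?|[//|[/eqP]]]; [by left | by rewrite (negbTE xz)].
  split=> [[/and3P [xs _ _] lt_zx]|[[/and3P [_ zs' _] _]|[/eqP]]];
    [|by rewrite zs' in zs|by rewrite (negbTE xz)].
  move: xs; rewrite (perm_mem zfront) inE (negbTE xz).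
  by move=> /lt_z; lia.
Qed.

Lemma is_perm_uniq m s : is_perm m s -> uniq s.
Proof. by move/perm_uniq ->; apply: iota_uniq. Qed.

Lemma is_perm_mem m s x : is_perm m s -> (x \in s) = (0 < x <= m).
Proof. by move/perm_mem ->; rewrite mem_iota add1n ltnS. Qed.

Lemma is_perm_size m s : is_perm m s -> size s = m.
Proof. by move/perm_size ->; rewrite size_iota. Qed.

Lemma is_perm_idn m : is_perm m (idn m).
Proof. exact: perm_refl. Qed.

Lemma is_perm_cins m s i : is_perm m s -> is_perm m.+1 (cins m.+1 i s).
Proof.
move=> perm_s; rewrite /is_perm /cins -[m.+1]addn1 iotaD add1n addn1 -cat1s perm_catCA.
by rewrite cat_take_drop perm_catC perm_cat2r.
Qed.

Lemma inv_cins m s i x y : is_perm m s ->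
  inv (cins m.+1 i s) (x, y) <-> inv s (x, y) \/ x = m.+1 /\ y \in drop i.-1 s.
Proof.
move=> perm_s; rewrite -{2}(cat_take_drop i.-1 s); apply: inv_insert_max.
  by rewrite cat_take_drop (is_perm_uniq perm_s).
by move=> v; rewrite cat_take_drop (is_perm_mem _ perm_s) ltnS => /andP [].
Qed.

(* In lemma names, [top] and [bot] refer to [cins m.+1 1 s = m.+1 :: s] and
   [cins m.+1 m.+1 s = s ++ [:: m.+1]], the greatest and least [cins m.+1 i s]. *)
Lemma inv_cins_top m s x y : is_perm m s ->
  inv (cins m.+1 1 s) (x, y) <-> inv s (x, y) \/ x = m.+1 /\ y \in s.
Proof. by move=> perm_s; have := inv_cins 1 x y perm_s; rewrite drop0. Qed.

Lemma inv_cins_bot m s p : is_perm m s -> inv (cins m.+1 m.+1 s) p <-> inv s p.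
Proof.
case: p => x y perm_s; have := inv_cins m.+1 x y perm_s.
rewrite drop_oversize ?(is_perm_size perm_s) // => ->.
by split=> [[|[]]|]; [|rewrite in_nil|left].
Qed.

Lemma weak_le_bot_cins m s i : is_perm m s ->
  weak_le (cins m.+1 m.+1 s) (cins m.+1 i s).
Proof. by move=> perm_s [x y]; rewrite inv_cins_bot // inv_cins //; left. Qed.

Lemma weak_le_cins_top m s i : is_perm m s ->
  weak_le (cins m.+1 i s) (cins m.+1 1 s).
Proof.
move=> perm_s [x y]; rewrite inv_cins // inv_cins_top //.
by case=> [|[-> /mem_drop]]; [left | right].
Qed.

Lemma weak_le_cins_top_mono m s t : is_perm m s -> is_perm m t -> weak_le s t ->
  weak_le (cins m.+1 1 s) (cins m.+1 1 t).
Proof.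
move=> perm_s perm_t le_st [x y]; rewrite !inv_cins_top //.
by case=> [/le_st|]; [left | rewrite (is_perm_mem _ perm_s) -(is_perm_mem _ perm_t); right].
Qed.

Lemma weak_le_idn m s : weak_le (idn m) s.
Proof. by move=> p /inv_iota. Qed.

Lemma inv_cins_idn m x y : 0 < m ->
  inv (cins m.+1 m (idn m)) (x, y) <-> x = m.+1 /\ y = m.
Proof.
move=> m_gt0; rewrite inv_cins ?drop_iota; last exact: is_perm_idn.
have -> : m - m.-1 = 1 by lia.
rewrite add1n prednK // inE.
by split=> [[/inv_iota|[-> /eqP]]|[-> ->]] //; right.
Qed.

Lemma is_join_le n x y : is_perm n y -> weak_le x y -> is_join n x y y.
Proof. by move=> perm_y le_xy; do !split=> //; move=> w _ _. Qed.

Lemma is_join_ge n x y : is_perm n x -> weak_le y x -> is_join n x y x.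
Proof. by move=> perm_x le_yx; do !split=> //; move=> w _. Qed.

Lemma is_meet_ge n x y : is_perm n y -> weak_le y x -> is_meet n x y y.
Proof. by move=> perm_y le_yx; do !split=> //; move=> w _ _. Qed.

Lemma not_inv_max m s y : is_perm m s -> ~ inv s (m.+1, y).
Proof. by move=> perm_s /inv_mem [+ _]; rewrite (is_perm_mem _ perm_s) ltnn andbF. Qed.

Lemma weak_le_cins_idn_top m s : 0 < m -> is_perm m s ->
  weak_le (cins m.+1 m (idn m)) (cins m.+1 1 s).
Proof.
move=> m_gt0 perm_s [x y] /(inv_cins_idn _ _ m_gt0) [-> ->].
by rewrite inv_cins_top //; right; rewrite (is_perm_mem _ perm_s) m_gt0 leqnn.
Qed.

Definition to_front (x : nat) (s : seq nat) : seq nat := x :: filter (predC1 x) s.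

Lemma is_perm_to_front m s : 0 < m -> is_perm m s -> is_perm m (to_front m s).
Proof.
move=> m_gt0 perm_s; have ms : m \in s by rewrite (is_perm_mem _ perm_s) m_gt0 leqnn.
rewrite /is_perm /to_front -rem_filter ?(is_perm_uniq perm_s) //.
by apply: perm_trans perm_s; rewrite perm_sym perm_to_rem.
Qed.

Lemma weak_le_to_front m s : is_perm m s -> weak_le s (to_front m s).
Proof.
move=> perm_s [x y] inv_xy; have [xs ys] := inv_mem inv_xy.
have lt_yx : y < x by case: inv_xy => i [j [_ [_ [_ [_]]]]].
have lt_m v : v \in filter (predC1 m) s -> v < m.
  by rewrite mem_filter (is_perm_mem _ perm_s) /= => /and3P [vm _ le_vm]; rewrite ltn_neqAle vm.
have := @inv_insert_max [::] (filter (predC1 m) s) m x y.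
rewrite filter_uniq ?(is_perm_uniq perm_s) //= => -> //.
have le_xm : x <= m by move: xs; rewrite (is_perm_mem _ perm_s) => /andP [].
case: (eqVneq x m) => [xm|xm]; first by right; rewrite mem_filter /= ys -xm neq_ltn lt_yx.
left; apply: inv_filter; rewrite ?(is_perm_uniq perm_s) //= neq_ltn.
by rewrite (leq_trans lt_yx le_xm).
Qed.

Lemma is_join_cins_idn m t : is_perm m (m :: t) ->
  is_join m.+1 (cins m.+1 m (idn m)) (cins m.+1 m.+1 (m :: t)) (cins m.+1 1 (m :: t)).
Proof.
move=> perm_t; have m_gt0 : 0 < m.
  by have := mem_head m t; rewrite (is_perm_mem _ perm_t) => /andP [].
split; first exact: is_perm_cins.
split; first exact: weak_le_cins_idn_top.
split; first exact: weak_le_bot_cins.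
move=> u perm_u le_w le_bot [x y]; rewrite inv_cins_top // => -[inv_xy|[-> ys]].
  by apply: le_bot; rewrite inv_cins_bot.
have inv_swap : inv u (m.+1, m) by apply: le_w; rewrite inv_cins_idn.
case: (eqVneq y m) => [-> //|ym].
have lt_ym : y < m.
  by move: ys; rewrite (is_perm_mem _ perm_t) => /andP [_ le_ym]; rewrite ltn_neqAle ym.
apply: inv_trans (is_perm_uniq perm_u) inv_swap _; apply: le_bot.
by rewrite inv_cins_bot //; apply: inv_cons; move: ys; rewrite inE (negbTE ym).
Qed.

Lemma is_meet_bot_top m s t : is_perm m s -> is_perm m t -> weak_le s t ->
  is_meet m.+1 (cins m.+1 m.+1 t) (cins m.+1 1 s) (cins m.+1 m.+1 s).
Proof.
move=> perm_s perm_t le_st; split; first exact: is_perm_cins.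
split; first by move=> p; rewrite !inv_cins_bot // => /le_st.
split; first exact: weak_le_bot_cins.
move=> u _ le_bot le_top [x y] inv_u; rewrite inv_cins_bot //.
have := le_top _ inv_u; rewrite inv_cins_top // => -[// | [xm _]].
by have := le_bot _ inv_u; rewrite inv_cins_bot // xm => /not_inv_max.
Qed.

Lemma is_meet_bot_idn m s : 0 < m -> is_perm m s ->
  is_meet m.+1 (cins m.+1 m.+1 s) (cins m.+1 m (idn m)) (idn m.+1).
Proof.
move=> m_gt0 perm_s; split; first exact: is_perm_idn.
do 2 (split; first exact: weak_le_idn).
move=> u _ le_bot le_w [x y] inv_u; exfalso.
have [xm _] := (inv_cins_idn x y m_gt0).1 (le_w _ inv_u).
by have := le_bot _ inv_u; rewrite inv_cins_bot // xm => /not_inv_max.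
Qed.

Section LatticeCongruence.

Variables (n : nat) (R : seq nat -> seq nat -> Prop).
Hypothesis congR : lattice_congruence n R.

Lemma congr_refl x : is_perm n x -> R x x.
Proof. by case: congR => refl _; apply: refl. Qed.

Lemma congr_sym x y : is_perm n x -> is_perm n y -> R x y -> R y x.
Proof. by case: congR => _ [sym _]; apply: sym. Qed.

Lemma congr_trans x y z : is_perm n x -> is_perm n y -> is_perm n z ->
  R x y -> R y z -> R x z.
Proof. by case: congR => _ [_ [trans _]]; apply: trans. Qed.

Lemma congr_join x x' y z z' : is_perm n x -> is_perm n x' -> is_perm n y ->
  R x x' -> is_join n x y z -> is_join n x' y z' -> R z z'.
Proof.
case: congR => _ [_ [_ [join _]]] px px' py rxx'.
by apply: join rxx' (congr_refl py).
Qed.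

Lemma congr_meet x x' y z z' : is_perm n x -> is_perm n x' -> is_perm n y ->
  R x x' -> is_meet n x y z -> is_meet n x' y z' -> R z z'.
Proof.
case: congR => _ [_ [_ [_ meet]]] px px' py rxx'.
by apply: meet rxx' (congr_refl py).
Qed.

Lemma congr_convex x y z : is_perm n x -> is_perm n y -> is_perm n z ->
  weak_le x y -> weak_le y z -> R x z -> R y z.
Proof.
move=> px py pz le_xy le_yz rxz.
by apply: congr_join px pz py rxz (is_join_le py le_xy) (is_join_ge pz le_yz).
Qed.

End LatticeCongruence.

Section InsertMax.

Variables (m : nat) (R : seq nat -> seq nat -> Prop).
Hypotheses (m_gt0 : 0 < m) (congR : lattice_congruence m.+1 R).

Lemma congr_cins_of_bot_top s : is_perm m s ->
  R (cins m.+1 m.+1 s) (cins m.+1 1 s) -> forall i j, R (cins m.+1 i s) (cins m.+1 j s).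
Proof.
move=> perm_s r_bot_top.
have r_top i : R (cins m.+1 i s) (cins m.+1 1 s).
  by apply: (congr_convex congR) r_bot_top;
    [apply: is_perm_cins.. | apply: weak_le_bot_cins | apply: weak_le_cins_top].
move=> i j; apply: (congr_trans congR) (r_top i) (congr_sym congR _ _ (r_top j));
  exact: is_perm_cins.
Qed.

Lemma congr_bot_top_of_cins s : is_perm m s ->
  (forall i, 1 <= i -> i < m.+1 -> R (cins m.+1 i s) (cins m.+1 i.+1 s)) ->
  R (cins m.+1 m.+1 s) (cins m.+1 1 s).
Proof.
move=> perm_s r_step.
have r_chain j : 0 < j <= m.+1 -> R (cins m.+1 1 s) (cins m.+1 j s).
  elim: j => [//|[|j] IHj] /andP [_ le_jm].
    exact/(congr_refl congR)/is_perm_cins.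
  apply: (congr_trans congR) (IHj (ltnW le_jm)) (r_step j.+1 isT le_jm);
  exact: is_perm_cins.
by apply: (congr_sym congR) (r_chain _ _); rewrite ?leqnn //; apply: is_perm_cins.
Qed.

Lemma congr_bot_top_of_idn : R (idn m.+1) (cins m.+1 m (idn m)) ->
  forall s, is_perm m s -> R (cins m.+1 m.+1 s) (cins m.+1 1 s).
Proof.
move=> r_swap s perm_s; have perm_t := is_perm_to_front m_gt0 perm_s.
have le_st := weak_le_to_front perm_s.
have r_t : R (cins m.+1 m.+1 (to_front m s)) (cins m.+1 1 (to_front m s)).
  have join_idn := is_join_le (is_perm_cins m.+1 perm_t) (@weak_le_idn m.+1 _).
  have join_swap := is_join_cins_idn perm_t.
  apply: (congr_join congR) r_swap join_idn join_swap;
    by do ?[apply: is_perm_idn | apply: is_perm_cins].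
have meet_top := is_meet_ge (is_perm_cins 1 perm_s) (weak_le_cins_top_mono perm_s perm_t le_st).
apply: (congr_meet congR) r_t (is_meet_bot_top perm_s perm_t le_st) meet_top;
  exact: is_perm_cins.
Qed.

Lemma congr_idn_of_bot_top s : is_perm m s ->
  R (cins m.+1 m.+1 s) (cins m.+1 1 s) -> R (idn m.+1) (cins m.+1 m (idn m)).
Proof.
move=> perm_s r_s.
have meet_top := is_meet_ge (is_perm_cins m (is_perm_idn m)) (weak_le_cins_idn_top m_gt0 perm_s).
apply: (congr_meet congR) r_s (is_meet_bot_idn m_gt0 perm_s) meet_top;
  by do ?[apply: is_perm_idn | apply: is_perm_cins].
Qed.

End InsertMax.

Theorem mainTheorem3 (n : nat) (R : seq nat -> seq nat -> Prop) :
  2 <= n -> lattice_congruence n R ->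
  (R (idn n) (cins n n.-1 (idn n.-1)) <->
   exists pi, is_perm n.-1 pi /\
     forall i, 1 <= i -> i < n -> R (cins n i pi) (cins n i.+1 pi)) /\
  ((exists pi, is_perm n.-1 pi /\
     forall i, 1 <= i -> i < n -> R (cins n i pi) (cins n i.+1 pi)) <->
   (forall pi, is_perm n.-1 pi ->
     forall i, 1 <= i -> i < n -> R (cins n i pi) (cins n i.+1 pi))).
Proof.
case: n => [|m] // m_gt0 congR /=.
have step_of_swap : R (idn m.+1) (cins m.+1 m (idn m)) -> forall pi, is_perm m pi ->
    forall i, 1 <= i -> i < m.+1 -> R (cins m.+1 i pi) (cins m.+1 i.+1 pi).
  move=> r_swap pi perm_pi i _ _; apply: (congr_cins_of_bot_top congR perm_pi).
  exact: (congr_bot_top_of_idn m_gt0 congR r_swap perm_pi).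
have swap_of_step pi : is_perm m pi ->
    (forall i, 1 <= i -> i < m.+1 -> R (cins m.+1 i pi) (cins m.+1 i.+1 pi)) ->
    R (idn m.+1) (cins m.+1 m (idn m)).
  move=> perm_pi /(congr_bot_top_of_cins congR perm_pi).
  exact: (congr_idn_of_bot_top m_gt0 congR perm_pi).
split; split.
- move=> r_swap; exists (idn m); split; first exact: is_perm_idn.
  exact: step_of_swap r_swap _ (is_perm_idn m).
- by case=> pi [perm_pi r_step]; apply: swap_of_step r_step.
- by case=> pi [perm_pi r_step]; apply: step_of_swap (swap_of_step pi perm_pi r_step).
- move=> r_step; exists (idn m); split; first exact: is_perm_idn.
  exact: r_step (is_perm_idn m).
Qed.
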